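(* Let $P$ be a planar convex polygon with vertices $P_1,\dots,P_{2n}$ (indices modulo $2n$) having parallel opposite sides, i.e. the segment $P_iP_{i+1}$ is parallel to $P_{i+n}P_{i+n+1}$ for $1\le i\le n$. Fix a point $Z$ and a number $a>0$, and let $U$ be the polygon with vertices $$U_i=Z+\frac{1}{2a}\left(P_i-P_{i+n}\right),\qquad 1\le i\le 2n.$$ Then $U$ is convex, symmetric with respect to $Z$, and $U_{i+1}-U_i\parallel P_{i+1}-P_i$ and $U_i-Z\parallel P_i-P_{i+n}$ for $1\le i\le n$. Moreover, $U$ is the unique polygon $\{U_1,\dots,U_{2n}\}$ with the given first vertex $U_1=Z+\frac1{2a}(P_1-P_{1+n})$ having these properties. *)

From HB Require Import structures.
From mathcomp Require Import all_boot all_order all_algebra.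
Set Implicit Arguments. Unset Strict Implicit. Unset Printing Implicit Defensive.
Import Order.TTheory GRing.Theory Num.Theory.
Local Open Scope ring_scope.

Definition cross (R : realFieldType) (u v : 'rV[R]_2) : R :=
  u ord0 ord0 * v ord0 ord_max - u ord0 ord_max * v ord0 ord0.

Definition parallel (R : realFieldType) (u v : 'rV[R]_2) : Prop := cross u v = 0.

(* Polygons are given as nat-indexed vertex sequences, periodic mod m. *)
Definition convex_polygon (R : realFieldType) (m : nat) (P : nat -> 'rV[R]_2) : Prop :=
  exists s : R, (s = 1 \/ s = -1) /\
    forall i j : nat, (j %% m != i %% m)%N -> (j %% m != i.+1 %% m)%N ->
      0 < s * cross (P i.+1 - P i) (P j - P i).

Definition symmetric_about (R : realFieldType) (n : nat) (Z : 'rV[R]_2)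
  (V : nat -> 'rV[R]_2) : Prop :=
  forall i : nat, V (i + n)%N - Z = - (V i - Z).

Definition U_props (R : realFieldType) (n : nat) (P : nat -> 'rV[R]_2)
  (Z : 'rV[R]_2) (V : nat -> 'rV[R]_2) : Prop :=
  [/\ convex_polygon (2 * n) V,
      symmetric_about n Z V &
      forall i : nat, (1 <= i <= n)%N ->
        parallel (V i.+1 - V i) (P i.+1 - P i) /\
        parallel (V i - Z) (P i - P (i + n)%N)].

From HB Require Import structures.
From mathcomp Require Import all_boot all_order all_algebra.
From mathcomp Require Import ring lra zify.
Import Order.TTheory GRing.Theory Num.Theory.
Local Open Scope ring_scope.
Set Implicit Arguments. Unset Strict Implicit. Unset Printing Implicit Defensive.

(* Write A = P_{i+1} - P_i and B = P_{i+n+1} - P_{i+n}.  Then U_{i+1} - U_i is a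
   positive multiple of A - B, so U inherits the edge directions of P.  Since A and
   B are parallel and P is convex, B is a negative multiple of A; hence, for
   D1 = P_j - P_i and D2 = P_{j+n} - P_{i+n}, each of the four terms of
   cross(A - B, D1 - D2) has the sign needed for strict convexity of U, and the first
   one is strictly positive.  Uniqueness: U_{i+1} lies on the line through U_i
   parallel to A and on the line through Z parallel to P_{i+1} - P_{i+n+1}; these
   lines are not parallel by convexity of P, so the vertices U_1, ..., U_n are
   determined one after another, and the symmetry about Z determines the rest. *)

Section Cross.
Variable R : realFieldType.
Implicit Types u v w x y d : 'rV[R]_2.

Lemma crossBl u v w : cross (u - v) w = cross u w - cross v w.
Proof. rewrite /cross !mxE; ring. Qed.

Lemma crossBr u v w : cross w (u - v) = cross w u - cross w v.
Proof. rewrite /cross !mxE; ring. Qed.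

Lemma crossZl (k : R) u w : cross (k *: u) w = k * cross u w.
Proof. rewrite /cross !mxE; ring. Qed.

Lemma crossZr (k : R) u w : cross w (k *: u) = k * cross w u.
Proof. rewrite /cross !mxE; ring. Qed.

Lemma crossNr u w : cross w (- u) = - cross w u.
Proof. rewrite /cross !mxE; ring. Qed.

Lemma crossC u w : cross u w = - cross w u.
Proof. rewrite /cross; ring. Qed.

Lemma crossxx u : cross u u = 0.
Proof. rewrite /cross; ring. Qed.

Lemma cross0r u : cross u 0 = 0.
Proof. rewrite /cross !mxE; ring. Qed.

Lemma cross_plucker u v x y :
  cross u v * cross x y = cross u x * cross v y - cross v x * cross u y.
Proof. rewrite /cross; ring. Qed.

Lemma antiparallel_cross u v w : cross u v = 0 -> 0 < cross u w -> cross v w < 0 ->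
  exists2 k, 0 < k & forall x, cross v x = - (k * cross u x).
Proof.
move=> uv0 uw_gt0 vw_lt0; exists (- cross v w / cross u w).
  by rewrite divr_gt0 // oppr_gt0.
move=> x; have := cross_plucker u v x w; rewrite uv0 mul0r => /eqP.
rewrite eq_sym subr_eq0 => /eqP uxvw.
have -> : cross v x = cross u x * cross v w / cross u w by rewrite uxvw mulfK ?gt_eqF.
ring.
Qed.

Lemma parallel2_eq0 d u v : cross d u = 0 -> cross d v = 0 -> cross u v != 0 -> d = 0.
Proof.
move=> du0 dv0 uv_neq0; apply/rowP => j; rewrite mxE.
(* Cramer's rule in the plane *)
have : cross u v * d ord0 j = cross d v * u ord0 j - cross d u * v ord0 j.
  have : (j == ord0) || (j == ord_max) by case: j => [[|[|]]].
  by case/orP => /eqP ->; rewrite /cross; ring.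
by rewrite du0 dv0 !mul0r subr0 => /eqP; rewrite mulf_eq0 (negbTE uv_neq0) => /eqP.
Qed.

End Cross.

Lemma periodic_modn (T : Type) (m : nat) (f : nat -> T) :
  (forall i, f (i + m)%N = f i) -> forall i, f i = f (i %% m)%N.
Proof.
move=> f_periodic i; rewrite {1}(divn_eq i m).
elim: (i %/ m)%N => [|q IHq]; first by rewrite mul0n add0n.
by rewrite mulSn -addnA addnC f_periodic.
Qed.

Lemma periodic_eq (T : Type) (m : nat) (f g : nat -> T) : (0 < m)%N ->
  (forall i, f (i + m)%N = f i) -> (forall i, g (i + m)%N = g i) ->
  (forall i, (1 <= i <= m)%N -> f i = g i) -> f =1 g.
Proof.
move=> m_gt0 f_periodic g_periodic fg i.
rewrite (periodic_modn f_periodic) (periodic_modn g_periodic).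
case: (posnP (i %% m)) => [->|r_gt0].
  by rewrite -[f 0%N]f_periodic -[g 0%N]g_periodic fg // add0n leqnn m_gt0.
by rewrite fg // r_gt0 ltnW // ltn_pmod.
Qed.

Lemma modn_add_neq (m i d : nat) : (0 < d < m)%N -> ((i + d) %% m != i %% m)%N.
Proof. by move=> hd; rewrite -{2}[i]addn0 eqn_modDl mod0n modn_small; lia. Qed.

Definition diff_polygon (R : realFieldType) (n : nat) (P : nat -> 'rV[R]_2)
  (Z : 'rV[R]_2) (c : R) (i : nat) : 'rV[R]_2 :=
  Z + c *: (P i - P (i + n)%N).

Section DiffPolygon.
Variables (R : realFieldType) (n : nat) (P : nat -> 'rV[R]_2).
Hypothesis n_ge2 : (2 <= n)%N.
Hypothesis P_periodic : forall i, P (i + 2 * n)%N = P i.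

Local Notation edge i := (P i.+1 - P i).

Lemma edge_periodic i : edge (i + 2 * n)%N = edge i.
Proof. by rewrite -addSn !P_periodic. Qed.

Hypothesis P_parallel :
  forall i, (1 <= i <= n)%N -> parallel (edge i) (edge (i + n)%N).

Lemma opposite_edges_parallel i : cross (edge i) (edge (i + n)%N) = 0.
Proof.
pose Q i := cross (edge i) (edge (i + n)%N).
have Q_periodic j : Q (j + 2 * n)%N = Q j.
  by rewrite /Q addnAC !edge_periodic.
have Q_shift j : Q (j + n)%N = - Q j.
  by rewrite /Q -addnA addnn -mul2n edge_periodic crossC.
have Q_eq0 j : (1 <= j <= n)%N -> Q j = 0 by exact: P_parallel.
rewrite -/(Q i) (periodic_modn Q_periodic).
have r_lt : (i %% (2 * n) < 2 * n)%N by rewrite ltn_pmod //; lia.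
move: (i %% (2 * n))%N r_lt => r r_lt.
case: (posnP r) => [->|r_gt0].
  by rewrite -[Q 0%N]Q_periodic add0n mul2n -addnn Q_shift Q_eq0 ?oppr0 //; lia.
case: (leqP r n) => r_n; first by apply: Q_eq0; lia.
by rewrite -(subnK (ltnW r_n)) Q_shift Q_eq0 ?oppr0 //; lia.
Qed.

Variable s : R.
Hypothesis P_convex : forall i j : nat, (j %% (2 * n) != i %% (2 * n))%N ->
  (j %% (2 * n) != i.+1 %% (2 * n))%N -> 0 < s * cross (edge i) (P j - P i).

Lemma convex_cross_ge0 i j : 0 <= s * cross (edge i) (P j - P i).
Proof.
rewrite (periodic_modn P_periodic j).
case: (eqVneq (j %% (2 * n)) (i %% (2 * n)))%N => [->|ji].
  by rewrite -periodic_modn // subrr cross0r mulr0.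
case: (eqVneq (j %% (2 * n)) (i.+1 %% (2 * n)))%N => [->|ji1].
  by rewrite -periodic_modn // crossxx mulr0.
by rewrite -periodic_modn //; apply/ltW/P_convex.
Qed.

Lemma convex_cross_gt0 i d : (1 < d < 2 * n)%N ->
  0 < s * cross (edge i) (P (i + d)%N - P i).
Proof.
move=> hd; apply: P_convex; first by apply: modn_add_neq; lia.
by rewrite -(subnKC (ltnW (proj1 (andP hd)))) addnA addn1 modn_add_neq //; lia.
Qed.

Lemma radius_edge_independent i : cross (edge i) (P i.+1 - P (i.+1 + n)%N) != 0.
Proof.
have := @convex_cross_gt0 i n.+1 ltac:(lia).
have -> : P i.+1 - P (i.+1 + n)%N = edge i - (P (i.+1 + n)%N - P i).
  by rewrite opprB addrA subrK.
rewrite addnS -addSn (crossBr (edge i)) crossxx sub0r.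
by rewrite oppr_eq0; apply: contraTneq => ->; rewrite mulr0 ltxx.
Qed.

Variables (Z : 'rV[R]_2) (c : R).

Local Notation U := (diff_polygon n P Z c).

Lemma diff_polygon_subZ i : U i - Z = c *: (P i - P (i + n)%N).
Proof. by rewrite /diff_polygon addrC addKr. Qed.

Lemma diff_polygon_sub i j :
  U i - U j = c *: ((P i - P j) - (P (i + n)%N - P (j + n)%N)).
Proof. by rewrite /diff_polygon; apply/rowP => k; rewrite !mxE; ring. Qed.

Lemma diff_polygon_periodic i : U (i + 2 * n)%N = U i.
Proof. by rewrite /diff_polygon addnAC !P_periodic. Qed.

Lemma diff_polygon_symmetric : symmetric_about n Z U.
Proof.
move=> i; rewrite !diff_polygon_subZ -addnA addnn -mul2n P_periodic.
by rewrite -scalerN opprB.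
Qed.

Lemma diff_polygon_edge_parallel i : parallel (U i.+1 - U i) (edge i).
Proof.
rewrite /parallel diff_polygon_sub addSn crossZl crossBl crossxx.
by rewrite crossC opposite_edges_parallel oppr0 subr0 mulr0.
Qed.

Lemma diff_polygon_unique (V : nat -> 'rV[R]_2) :
  (forall i, V (i + 2 * n)%N = V i) -> V 1%N = U 1%N -> U_props n P Z V -> V =1 U.
Proof.
move=> V_periodic V1 [_ V_symmetric V_parallel].
have lower_half k : (1 <= k <= n)%N -> V k = U k.
  elim: k => [//|k IHk] /andP[_ k_le_n]; case: (posnP k) => [-> //|k_gt0].
  have Vk := IHk ltac:(lia).
  have [V_edge _] := V_parallel k ltac:(lia).
  have [_ V_radius] := V_parallel k.+1 ltac:(lia).
  apply/eqP; rewrite -subr_eq0; apply/eqP.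
  apply: (parallel2_eq0 _ _ (radius_edge_independent k)).
    have -> : V k.+1 - U k.+1 = (V k.+1 - V k) - (U k.+1 - U k).
      by rewrite Vk opprB addrA subrK.
    by rewrite crossBl V_edge diff_polygon_edge_parallel subrr.
  have -> : V k.+1 - U k.+1 = (V k.+1 - Z) - (U k.+1 - Z) by rewrite opprB addrA subrK.
  by rewrite crossBl V_radius diff_polygon_subZ crossZl crossxx mulr0 subrr.
apply: periodic_eq V_periodic diff_polygon_periodic _; first lia.
move=> k k_range; case: (leqP k n) => k_n; first by apply: lower_half; lia.
rewrite -(subnK (ltnW k_n)); apply: (subIr Z).
by rewrite V_symmetric diff_polygon_symmetric lower_half //; lia.
Qed.

Hypothesis c_gt0 : 0 < c.

Lemma diff_polygon_convex : s = 1 \/ s = -1 -> convex_polygon (2 * n) U.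
Proof.
move=> s_sign; exists s; split => // i j ji ji1.
rewrite !diff_polygon_sub addSn crossZl crossZr.
set A := edge i; set B := edge (i + n)%N.
set D1 := P j - P i; set D2 := P (j + n)%N - P (i + n)%N.
have AD1_gt0 : 0 < cross (s *: A) D1 by rewrite crossZl; apply: P_convex.
have BD2_ge0 : 0 <= cross (s *: B) D2 by rewrite crossZl; apply: convex_cross_ge0.
have [k k_gt0 BA] :
    exists2 k, 0 < k & forall x, cross (s *: B) x = - (k * cross (s *: A) x).
  apply: (antiparallel_cross (w := P (i + n)%N - P i)).
  - by rewrite crossZl crossZr opposite_edges_parallel !mulr0.
  - by rewrite crossZl; apply: convex_cross_gt0; lia.
  rewrite -oppr_gt0 -crossNr opprB crossZl.
  have := @convex_cross_gt0 (i + n) n ltac:(lia).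
  by rewrite -addnA addnn -mul2n P_periodic.
have AD2_le0 : cross (s *: A) D2 <= 0.
  by rewrite -(pmulr_rle0 _ k_gt0) -oppr_ge0 -BA.
have kAD1_gt0 : 0 < k * cross (s *: A) D1 by rewrite mulr_gt0.
have -> : s * (c * (c * cross (A - B) (D1 - D2))) =
          (c * c) * cross (s *: A - s *: B) (D1 - D2).
  by rewrite -scalerBr crossZl; ring.
rewrite (pmulr_rgt0 _ (mulr_gt0 c_gt0 c_gt0)) crossBl !(crossBr D1 D2) !BA.
rewrite BA in BD2_ge0; lra.
Qed.

Lemma diff_polygon_props : s = 1 \/ s = -1 -> U_props n P Z U.
Proof.
move=> s_sign; split; [exact: diff_polygon_convex | exact: diff_polygon_symmetric |].
move=> i _; split; first exact: diff_polygon_edge_parallel.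
by rewrite /parallel diff_polygon_subZ crossZl crossxx mulr0.
Qed.

End DiffPolygon.

Theorem lemma2p1 (R : realFieldType) (n : nat) (P : nat -> 'rV[R]_2)
  (Z : 'rV[R]_2) (a : R) :
  (2 <= n)%N ->
  (forall i : nat, P (i + 2 * n)%N = P i) ->
  convex_polygon (2 * n) P ->
  (forall i : nat, (1 <= i <= n)%N ->
     parallel (P i.+1 - P i) (P (i + n).+1 - P (i + n)%N)) ->
  0 < a ->
  let U := fun i : nat => Z + (2 * a)^-1 *: (P i - P (i + n)%N) in
  U_props n P Z U /\
  (forall V : nat -> 'rV[R]_2,
     (forall i : nat, V (i + 2 * n)%N = V i) ->
     V 1%N = U 1%N ->
     U_props n P Z V ->
     forall i : nat, V i = U i).
Proof.
move=> n_ge2 P_periodic [s [s_sign P_convex]] P_parallel a_gt0 U.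
have c_gt0 : 0 < (2 * a)^-1 by rewrite invr_gt0 mulr_gt0.
split.
  exact: (diff_polygon_props n_ge2 P_periodic P_parallel P_convex Z c_gt0 s_sign).
move=> V V_periodic V1 V_props.
exact: (diff_polygon_unique n_ge2 P_periodic P_parallel P_convex V_periodic V1 V_props).
Qed.
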